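(* Let $\sigma=(V,\mathrm{atime},\mathrm{pos})$ be an instance of $k$-MPMD on an $H$-metric space with parameter $\gamma$. Let $\mathcal M$ be any perfect $k$-way matching of $V$ and let $M=\{\{u,v\}\in E:\exists F\in\mathcal M,\ u,v\in F\}$. Then the characteristic vector $x=\mathbb 1_M\in\{0,1\}^E$ is a feasible solution of the linear program $(\mathcal P')$. Moreover, $\mathcal P'(\sigma)\le\mathcal{OPT}(\sigma)$, where $\mathcal P'(\sigma)$ is the optimal value of $(\mathcal P')$.
   Context: $k\ge2$. An $H$-metric with parameter $\gamma$ (integer, $1\le\gamma\le k-1$) is a map $d_H:\chi^k\to[0,\infty)$ that is invariant under permutation of its arguments, is zero iff all arguments are equal, satisfies $d_H(p_1,\ldots,p_k)\le d_H(p_1,\ldots,p_i,a,\ldots,a)+d_H(a,\ldots,a,p_{i+1},\ldots,p_k)$ for all $p_j,a\in\chi$ and $i\in\{1,\dots,k\}$ (with $k-i$, resp. $i$, copies of $a$), and satisfies: $d_H(p)\le d_H(p')$ whenever the set of distinct entries of $p$ is a proper subset of that of $p'$, and $d_H(p)\le\gamma d_H(p')$ whenever these sets are equal. An instance of $k$-MPMD is $\sigma=(V,\mathrm{atime},\mathrm{pos})$ with $V=\{u_1,\ldots,u_m\}$ a set of requests ($m$ a multiple of $k$), arrival times $\mathrm{atime}:V\to\mathbb R_{\ge0}$ nondecreasing in the index, and positions $\mathrm{pos}:V\to\chi$. A perfect $k$-way matching is a partition of $V$ into $k$-element sets. For a $k$-element $F=\{v_1,\ldots,v_k\}$, $\mathrm{opt\text{-}cost}(F):=d_H(\mathrm{pos}(v_1),\ldots,\mathrm{pos}(v_k))+\sum_{i=1}^k(\max_j\mathrm{atime}(v_j)-\mathrm{atime}(v_i))$,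 and $\mathcal{OPT}(\sigma)$ is the minimum of $\sum_{F\in\mathcal M}\mathrm{opt\text{-}cost}(F)$ over perfect $k$-way matchings $\mathcal M$ (the offline optimum). The metric $d$ on $\chi$ is $d(p,q):=d_H(p,q,\ldots,q)+d_H(q,p,\ldots,p)$ (first argument once, second $k-1$ times). $E$ is the set of unordered pairs $\{u,w\}$ of distinct requests, and $\mathrm{opt\text{-}cost}(\{u,w\}):=d(\mathrm{pos}(u),\mathrm{pos}(w))+|\mathrm{atime}(u)-\mathrm{atime}(w)|$. For $S\subseteq V$, $\mathrm{sur}(S):=|S|\bmod k$ and $\delta(S)$ is the set of pairs in $E$ with exactly one element in $S$. The LP $(\mathcal P')$ is: minimize $\sum_{e\in E}\frac{1}{\gamma k^2}\mathrm{opt\text{-}cost}(e)x_e$ subject to $\sum_{e\in\delta(S)}x_e\ge\mathrm{sur}(S)(k-\mathrm{sur}(S))$ for all $S\subseteq V$, and $x_e\ge0$ for all $e\in E$. *)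

From HB Require Import structures.
From mathcomp Require Import all_boot all_order all_algebra all_fingroup.
From mathcomp Require Import classical_sets reals.
Set Implicit Arguments. Unset Strict Implicit. Unset Printing Implicit Defensive.
Import Order.TTheory GRing.Theory Num.Theory.
Local Open Scope ring_scope.

Section Defs.
Variables (R : realType) (chi : Type) (k : nat).

Definition entries (p : 'I_k -> chi) : chi -> Prop := fun x => exists j, p j = x.

Definition is_Hmetric (dH : ('I_k -> chi) -> R) (gamma : nat) : Prop :=
  (forall p, 0 <= dH p) /\
  [/\ (forall (s : 'S_k) p, dH (fun j => p (s j)) = dH p),
      (forall p, dH p = 0 <-> (forall i j, p i = p j)),
      (forall p (a : chi) (i : nat), (1 <= i <= k)%N ->
         dH p <= dH (fun j => if (val j < i)%N then p j else a)
                 + dH (fun j => if (val j < i)%N then a else p j)),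
      (forall p p', (forall x, entries p x -> entries p' x) ->
                    (exists x, entries p' x /\ ~ entries p x) -> dH p <= dH p') &
      (forall p p', (forall x, entries p x <-> entries p' x) ->
                    dH p <= gamma%:R * dH p')].

Definition dmet (dH : ('I_k -> chi) -> R) (p q : chi) : R :=
  dH (fun j => if val j == 0%N then p else q) + dH (fun j => if val j == 0%N then q else p).

Variables (m : nat) (dH : ('I_k -> chi) -> R)
  (atime : 'I_m -> R) (pos : 'I_m -> chi).

Definition perfect_kmatching (M : {set {set 'I_m}}) : Prop :=
  finset.partition M [set: 'I_m] /\ (forall F, F \in M -> #|F| = k).

Definition opt_cost (F : {set 'I_m}) : R :=
  match enum F with
  | [::] => 0
  | x0 :: _ =>
      dH (fun j : 'I_k => pos (nth x0 (enum F) j))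
      + \sum_(v in F) (\big[Order.max/atime x0]_(w in F) atime w - atime v)
  end.

Definition matching_cost (M : {set {set 'I_m}}) : R := \sum_(F in M) opt_cost F.

Definition OPT : R :=
  inf [set c | exists M, perfect_kmatching M /\ c = matching_cost M].

Definition Epairs : {set {set 'I_m}} := [set e : {set 'I_m} | #|e| == 2%N].

Definition pair_cost (e : {set 'I_m}) : R :=
  match enum e with
  | [:: u; w] => dmet dH (pos u) (pos w) + `|atime u - atime w|
  | _ => 0
  end.

Definition sur (S : {set 'I_m}) : nat := (#|S| %% k)%N.

Definition delta (S : {set 'I_m}) : {set {set 'I_m}} :=
  [set e in Epairs | #|e :&: S| == 1%N].

Variable gamma : nat.

Definition LP_obj (x : {set 'I_m} -> R) : R :=
  \sum_(e in Epairs) (gamma%:R * (k ^ 2)%:R)^-1 * pair_cost e * x e.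

Definition LP_feasible (x : {set 'I_m} -> R) : Prop :=
  (forall S : {set 'I_m},
     ((sur S * (k - sur S))%N)%:R <= \sum_(e in delta S) x e) /\
  (forall e, e \in Epairs -> 0 <= x e).

Definition LP_value : R := inf [set LP_obj x | x in LP_feasible].

Definition pairs_of (M : {set {set 'I_m}}) : {set {set 'I_m}} :=
  [set e in Epairs | [exists F in M, e \subset F]].

Definition char_vec (P : {set {set 'I_m}}) : {set 'I_m} -> R :=
  fun e => if e \in P then 1 else 0.

End Defs.

(* Feasibility: a block F of the matching with a := #|F :&: S| contributes
   a * (k - a) pairs crossing the cut S, and a |-> (a %% k) * (k - a %% k) is
   subadditive, so the blocks together supply at least sur(S) (k - sur(S))
   crossing pairs.  Cost: a pair {u, w} inside a block F costs at most
   2 gamma opt-cost(F), because both halves of d(pos u, pos w) are H-distances of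
   configurations whose entries lie among those of F, and |atime u - atime w| is
   at most the total waiting time of F.  A block has 'C(k, 2) <= k^2 / 2 pairs, so
   the LP cost of the pairs of any perfect matching is at most its cost; taking
   infima gives P'(sigma) <= OPT(sigma). *)

From HB Require Import structures.
From mathcomp Require Import all_boot all_order all_algebra all_fingroup.
From mathcomp Require Import classical_sets reals.
From mathcomp Require Import zify lra.
Import Order.TTheory GRing.Theory Num.Theory.
Local Open Scope ring_scope.

Definition cut_demand (k a : nat) : nat := (a %% k) * (k - a %% k).

Lemma cut_demandD {k} a b : (0 < k)%N ->
  (cut_demand k (a + b) <= cut_demand k a + cut_demand k b)%N.
Proof.
move=> k_gt0; rewrite /cut_demand -modnDm.
move: (ltn_pmod a k_gt0) (ltn_pmod b k_gt0).
move: (a %% k)%N (b %% k)%N => {}a {}b a_lt b_lt.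
have [ab_lt|ab_ge] := ltnP (a + b) k; first by rewrite modn_small //; nia.
have -> : ((a + b) %% k = a + b - k)%N.
  by rewrite -{1}(subnK ab_ge) modnDr modn_small //; lia.
nia.
Qed.

Lemma cut_demand_sum {I : Type} (r : seq I) (P : pred I) (a : I -> nat) {k} :
  (0 < k)%N ->
  (cut_demand k (\sum_(i <- r | P i) a i)
     <= \sum_(i <- r | P i) cut_demand k (a i))%N.
Proof.
move=> k_gt0; elim/big_rec2: _ => [|i y2 y1 _ le_y].
  by rewrite /cut_demand mod0n.
by apply: leq_trans (cut_demandD _ _ k_gt0) _; rewrite leq_add2l.
Qed.

Lemma cut_demand_le {k a} : (a <= k)%N -> (cut_demand k a <= a * (k - a))%N.
Proof.
rewrite leq_eqVlt => /orP[/eqP->|a_lt]; first by rewrite /cut_demand modnn.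
by rewrite /cut_demand modn_small.
Qed.

Lemma cardsI_partition {T : finType} {P : {set {set T}}} {D : {set T}} (S : {set T}) :
  finset.partition P D -> #|D :&: S| = (\sum_(F in P) #|F :&: S|)%N.
Proof.
case/and3P=> /eqP <- tP _; rewrite -sum1_card.
rewrite (eq_bigl (fun x => (x \in finset.cover P) && (x \in S))) => [|x];
  last by rewrite inE.
rewrite big_trivIset_cond //; apply: eq_bigr => F _.
by rewrite -sum1_card; apply: eq_bigl => x; rewrite inE.
Qed.

Lemma mul_cardID_le_card_delta {m : nat} (F S : {set 'I_m}) :
  (#|F :&: S| * #|F :\: S| <= #|[set e in delta S | e \subset F]|)%N.
Proof.
rewrite -cardsX.
pose pair_of (uv : 'I_m * 'I_m) := [set uv.1; uv.2].
have pair_inj : {in finset.setX (F :&: S) (F :\: S) &, injective pair_of}.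
  move=> [u v] [u' v'] /finset.setXP[/= /setIP[_ uS] /setDP[_ vS]]
    /finset.setXP[/= /setIP[_ u'S] /setDP[_ v'S]] /setP eq_uv.
  have := eq_uv u; rewrite !inE eqxx /= => /esym/orP[/eqP eu|/eqP eu].
    have := eq_uv v; rewrite !inE eqxx orbT => /esym/orP[/eqP ev|/eqP ev].
      by move: vS; rewrite ev u'S.
    by rewrite eu ev.
  by move: v'S; rewrite -eu uS.
rewrite -(card_in_imset pair_inj); apply: subset_leq_card.
apply/fintype.subsetP => e /imsetP[[u v] /finset.setXP[/= /setIP[uF uS] /setDP[vF vS]] ->].
have uv : u != v by apply: contraNneq vS => <-.
rewrite /pair_of /= !inE cards2 uv /=.
have -> : [set u; v] :&: S = [set u].
  apply/setP => x; rewrite !inE.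
  have [->|xu] := eqVneq x u; first by rewrite uS.
  by have [->|xv] := eqVneq x v; rewrite ?(negbTE vS) ?andbF.
rewrite cards1 /=.
by apply/fintype.subsetP => x; rewrite !inE => /orP[] /eqP ->.
Qed.

Lemma leq_sum_card_subset_trivIset {T : finType} {P D : {set {set T}}} :
  finset.trivIset P -> finset.set0 \notin D ->
  (\sum_(F in P) #|[set e in D | e \subset F]|
     <= #|[set e in D | [exists F in P, e \subset F]]|)%N.
Proof.
move=> tP D_nz.
under eq_bigr => F _ do rewrite -sum1_card big_mkcond /=.
rewrite exchange_big /= -sum1_card [leqRHS]big_mkcond /=; apply: leq_sum => e _.
rewrite inE; have [eD|eND] /= := boolP (e \in D); last first.
  by rewrite big1 // => F _; rewrite inE (negbTE eND).
case: (pickP [pred F in P | e \subset F]) => [F0 /andP[F0P eF0]|none]; last first.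
  by rewrite big1 // => F FP; rewrite inE eD; have := none F; rewrite inE FP /= => ->.
have [x xe] : exists x, x \in e by apply/set0Pn; apply: contraNneq D_nz => <-.
rewrite (bigD1 F0) //= inE eD eF0 big1 ?addn0; last first.
  move=> F /andP[FP neF]; rewrite inE eD /=; case: ifP => // eF.
  have F_F0_disj := (finset.trivIsetP tP) F F0 FP F0P neF.
  move: (disjointFr F_F0_disj (fintype.subsetP eF x xe)).
  by rewrite (fintype.subsetP eF0 x xe).
by case: existsP => // -[]; exists F0; rewrite F0P.
Qed.

Lemma char_vec_pairs_of_feasible (R : realType) (k m : nat)
    (M : {set {set 'I_m}}) :
  (0 < k)%N -> perfect_kmatching k M -> LP_feasible k (char_vec R (pairs_of M)).
Proof.
move=> k_gt0 [partM cardM]; split=> [S|e _]; last by rewrite /char_vec; case: ifP.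
have trivM : finset.trivIset M by case/and3P: partM.
have -> : \sum_(e in delta S) char_vec R (pairs_of M) e
          = #|[set e in delta S | [exists F in M, e \subset F]]|%:R.
  rewrite /char_vec -big_mkcondr /= -sum1_card natr_sum.
  apply: eq_bigl => e; rewrite [in RHS]inE; apply: andb_id2l.
  by rewrite /delta inE => /andP[eE _]; rewrite /pairs_of inE eE.
rewrite ler_nat.
have -> : (sur k S * (k - sur k S))%N = cut_demand k #|S| by [].
have -> : #|S| = (\sum_(F in M) #|F :&: S|)%N.
  by rewrite -(cardsI_partition S partM) finset.setTI.
apply: leq_trans (cut_demand_sum _ _ _ k_gt0) _.
apply: leq_trans (leq_sum_card_subset_trivIset trivM _); last by rewrite !inE cards0.
apply: leq_sum => F FM.
have cardFS : (#|F :&: S| <= k)%N by rewrite -(cardM F FM) subset_leq_card // subsetIl.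
apply: leq_trans (cut_demand_le cardFS) _.
rewrite -[k in (k - _)%N](cardM F FM) -(cardsID S F) addKn.
exact: mul_cardID_le_card_delta.
Qed.

Section BlockCost.
Context {R : realType} {chi : Type} {k gamma m : nat} {dH : ('I_k -> chi) -> R}.
Variables (atime : 'I_m -> R) (pos : 'I_m -> chi).
Hypotheses (gamma_ge1 : (1 <= gamma)%N) (dH_Hmetric : is_Hmetric dH gamma).

Let dH_ge0 : forall p, 0 <= dH p := proj1 dH_Hmetric.

Lemma Hmetric_le_sub_entries p p' : (forall x, entries p x -> entries p' x) ->
  dH p <= gamma%:R * dH p'.
Proof.
have [_ [_ _ _ dH_proper dH_same]] := dH_Hmetric; move=> sub_pp'.
have [[x [p'x Npx]]|] := boolp.pselect (exists x, entries p' x /\ ~ entries p x).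
  apply: le_trans (dH_proper p p' sub_pp' _) _; first by exists x.
  by rewrite -[leLHS]mul1r ler_wpM2r // ler1n.
move=> Nnew; apply: dH_same => x; split=> [/sub_pp'//|p'x].
by apply: boolp.contrapT => Npx; apply: Nnew; exists x.
Qed.

Lemma pair_cost_ge0 (e : {set 'I_m}) : 0 <= pair_cost dH atime pos e.
Proof.
rewrite /pair_cost; case: (enum e) => [|u [|w [|]]] //.
by rewrite !addr_ge0.
Qed.

Lemma opt_cost_ge0 (F : {set 'I_m}) : 0 <= opt_cost dH atime pos F.
Proof.
rewrite /opt_cost; case: (enum F) => [|x0 s] //.
by rewrite addr_ge0 // sumr_ge0 // => v vF; rewrite subr_ge0 le_bigmax_cond.
Qed.

Lemma pair_cost_le_opt_cost (F e : {set 'I_m}) :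
  #|F| = k -> e \in Epairs m -> e \subset F ->
  pair_cost dH atime pos e <= 2 * gamma%:R * opt_cost dH atime pos F.
Proof.
move=> card_F; rewrite inE => /eqP card_e sub_eF; rewrite /pair_cost.
have : size (enum e) = 2%N by rewrite -cardE.
case enum_e: (enum e) => [|u [|w [|]]] // _.
have [uF wF] : u \in F /\ w \in F.
  by split; apply: (fintype.subsetP sub_eF); rewrite -mem_enum enum_e !inE eqxx ?orbT.
have := opt_cost_ge0 F; rewrite /opt_cost.
case enum_F: (enum F) => [|x0 s]; first by move: uF; rewrite -mem_enum enum_F.
set tmax := \big[Order.max/atime x0]_(w in F) atime w.
set D := dH _; set T := \sum_(v in F) _ => DT_ge0.
have waitP v : v \in F -> 0 <= tmax - atime v <= T.
  move=> vF; rewrite subr_ge0 le_bigmax_cond //= /T (bigD1 v) //= lerDl.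
  by rewrite sumr_ge0 // => v' /andP[v'F _]; rewrite subr_ge0 le_bigmax_cond.
have in_block v : v \in F -> entries (fun j : 'I_k => pos (nth x0 (x0 :: s) j)) (pos v).
  move=> vF; have v_lt : (index v (enum F) < k)%N.
    by rewrite -card_F cardE index_mem mem_enum.
  by exists (Ordinal v_lt); rewrite /= -enum_F nth_index ?mem_enum.
have dH_pair_le v v' : v \in F -> v' \in F ->
    dH (fun j : 'I_k => if val j == 0%N then pos v else pos v') <= gamma%:R * D.
  move=> vF v'F; apply: Hmetric_le_sub_entries => _ [j <-].
  by case: ifP => _; apply: in_block.
have := dH_pair_le u w uF wF; have := dH_pair_le w u wF uF.
have /andP[Tu_ge0 Tu] := waitP u uF; have /andP[Tw_ge0 Tw] := waitP w wF.
have T_ge0 : 0 <= T := le_trans Tu_ge0 Tu.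
have T_le : T <= gamma%:R * T by rewrite -[leLHS]mul1r ler_wpM2r // ler1n.
have delay_le : `|atime u - atime w| <= T by rewrite ler_norml; apply/andP; split; lra.
rewrite /dmet; lra.
Qed.

Lemma card_Epairs_subset (F : {set 'I_m}) :
  #|[set e in Epairs m | e \subset F]| = 'C(#|F|, 2).
Proof. by rewrite -cards_draws; apply: eq_card => e; rewrite !inE andbC. Qed.

Lemma LP_cost_in_block_le_opt_cost (F : {set 'I_m}) : (0 < k)%N -> #|F| = k ->
  \sum_(e in Epairs m | e \subset F) (gamma%:R * (k ^ 2)%:R)^-1 * pair_cost dH atime pos e
    <= opt_cost dH atime pos F.
Proof.
move=> k_gt0 card_F.
rewrite -mulr_sumr ler_pdivrMl ?mulr_gt0 ?ltr0n ?expn_gt0 ?k_gt0 //.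
apply: le_trans (_ : _ <= \sum_(e in Epairs m | e \subset F)
                             2 * gamma%:R * opt_cost dH atime pos F) _.
  by apply: ler_sum => e /andP[eE sub_eF]; apply: pair_cost_le_opt_cost.
rewrite (eq_bigl (fun e => e \in [set e in Epairs m | e \subset F])) => [|e];
  last by rewrite inE.
rewrite sumr_const card_Epairs_subset card_F -mulr_natr.
have two_bin_le : (2 * 'C(k, 2))%:R <= (k ^ 2)%:R :> R by rewrite ler_nat bin2; lia.
have gamma_opt_ge0 : 0 <= gamma%:R * opt_cost dH atime pos F.
  by rewrite mulr_ge0 ?opt_cost_ge0.
rewrite natrM in two_bin_le; nra.
Qed.

Lemma LP_obj_ge0 (x : {set 'I_m} -> R) : (forall e, e \in Epairs m -> 0 <= x e) ->
  0 <= LP_obj dH atime pos gamma x.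
Proof.
move=> x_ge0; rewrite /LP_obj sumr_ge0 // => e eE.
by rewrite !mulr_ge0 ?x_ge0 ?pair_cost_ge0 // invr_ge0 mulr_ge0.
Qed.

Lemma LP_obj_pairs_of_le_matching_cost {M : {set {set 'I_m}}} : (0 < k)%N ->
  perfect_kmatching k M ->
  LP_obj dH atime pos gamma (char_vec R (pairs_of M)) <= matching_cost dH atime pos M.
Proof.
move=> k_gt0 [_ cardM]; rewrite /LP_obj /matching_cost.
have term_ge0 e : 0 <= (gamma%:R * (k ^ 2)%:R)^-1 * pair_cost dH atime pos e.
  by rewrite mulr_ge0 ?pair_cost_ge0 // invr_ge0 mulr_ge0.
apply: le_trans _ (ler_sum _ _); last first.
  by move=> F FM; apply: LP_cost_in_block_le_opt_cost k_gt0 (cardM F FM).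
rewrite /= (exchange_big_dep (fun e => e \in Epairs m)) /=; last by move=> F e _ /andP[].
apply: ler_sum => e eE; rewrite /char_vec; case: ifP => [|_]; last first.
  by rewrite mulr0 sumr_ge0.
rewrite inE eE => /existsP[F0 /andP[F0M sub_eF0]].
by rewrite mulr1 (bigD1 F0) ?F0M ?eE //= lerDl sumr_ge0.
Qed.

End BlockCost.

Theorem lemma2 (R : realType) (chi : Type) (k gamma m : nat)
  (dH : ('I_k -> chi) -> R) (atime : 'I_m -> R) (pos : 'I_m -> chi)
  (M : {set {set 'I_m}}) :
  (2 <= k)%N -> (1 <= gamma <= k - 1)%N ->
  is_Hmetric dH gamma ->
  (k %| m)%N ->
  (forall i j : 'I_m, (i <= j)%N -> atime i <= atime j) ->
  perfect_kmatching k M ->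
  LP_feasible k (char_vec R (pairs_of M)) /\
  LP_value dH atime pos gamma <= OPT dH atime pos.
Proof.
move=> k_ge2 /andP[gamma_ge1 _] dH_Hmetric _ _ partM.
have k_gt0 := ltnW k_ge2.
split; first exact: char_vec_pairs_of_feasible.
apply: lb_le_inf; first by exists (matching_cost dH atime pos M), M.
move=> _ [M' [partM' ->]].
apply: le_trans _ (LP_obj_pairs_of_le_matching_cost atime pos gamma_ge1 dH_Hmetric
                     k_gt0 partM').
apply: ge_inf; first by exists 0 => _ [x [_ x_ge0] <-]; apply: LP_obj_ge0.
by exists (char_vec R (pairs_of M')) => //; apply: char_vec_pairs_of_feasible.
Qed.
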